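(* Let $\mathbb{H}$ be a finite-dimensional complex Hilbert space with $\dim\mathbb{H}\ge2$, let $|X\rangle\in\mathbb{H}^{\otimes3}$ be a known unit vector, let $c'_1,c'_2>0$, and let $\alpha,\beta$ be nonzero complex numbers with $|\alpha|^2+|\beta|^2=1$, $|\mu\rangle=\alpha|0\rangle+\beta|1\rangle\in\mathbb{C}^2$. Then there exists a probabilistic quantum transformation $\mathcal{F}'$ from $\mathbb{C}^2\otimes\mathbb{H}^{\otimes2}\otimes\mathbb{H}^{\otimes2}$ to $\mathbb{H}$, independent of $\alpha,\beta,\psi,\phi$, such that for all unit vectors $|\psi\rangle,|\phi\rangle\in\mathbb{H}$ satisfying $$|\langle X|(|\psi\rangle|\psi\rangle|\phi\rangle)|^2=c'_1,\qquad |\langle X|(|\phi\rangle|\phi\rangle|\psi\rangle)|^2=c'_2,$$ one has $\mathcal{F}'(\rho_\mu\otimes\rho_\psi^{\otimes2}\otimes\rho_\phi^{\otimes2})=\rho_{\varphi'}$ with $$|\varphi'\rangle\propto\alpha e^{i\theta_3}|\psi\rangle+\beta e^{i\theta_4}|\phi\rangle,\quad e^{i\theta_3}=\frac{\langle X|(|\phi\rangle|\phi\rangle|\psi\rangle)}{|\langle X|(|\phi\rangle|\phi\rangle|\psi\rangle)|},\quad e^{i\theta_4}=\frac{\langle X|(|\psi\rangle|\psi\rangle|\phi\rangle)}{|\langle X|(|\psi\rangle|\psi\rangle|\phi\rangle)|}$$ (the superposition assumed nonzero).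
   Context: For a unit vector $|\psi\rangle$, $\rho_\psi=|\psi\rangle\langle\psi|$; $|\varphi\rangle\propto|\chi\rangle$ means $|\varphi\rangle$ is the normalization of $|\chi\rangle$ up to a global phase. A probabilistic quantum transformation from $\mathbb{H}_1$ to $\mathbb{H}_2$ is a completely positive, trace-non-increasing linear map from operators on $\mathbb{H}_1$ to operators on $\mathbb{H}_2$; $\mathcal{F}(\rho)=\sigma$ for pure states means $\mathcal{F}(\rho)=p\sigma$ for some $p>0$. *)

From HB Require Import structures.
From mathcomp Require Import all_boot all_order all_algebra.
Set Implicit Arguments. Unset Strict Implicit. Unset Printing Implicit Defensive.
Import Order.TTheory GRing.Theory Num.Theory.
Local Open Scope ring_scope.

Section QDefs.
Variable C : numClosedFieldType.

Definition adjmx m n (A : 'M[C]_(m, n)) : 'M[C]_(n, m) := (map_mx Num.conj A)^T.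

Definition braket n (u v : 'cV[C]_n) : C := (adjmx u *m v) 0 0.

Definition unit_vec n (v : 'cV[C]_n) : Prop := braket v v = 1.

Definition rho n (v : 'cV[C]_n) : 'M[C]_n := v *m adjmx v.

Definition normalize n (v : 'cV[C]_n) : 'cV[C]_n := (sqrtC (braket v v))^-1 *: v.

Definition phase (z : C) : C := z / `|z|.

Definition psd n (A : 'M[C]_n) : Prop := forall v : 'cV[C]_n, 0 <= braket v (A *m v).

End QDefs.

(* index bookkeeping for the Kronecker (tensor) product, row-major order:
   the pair (i, j) in 'I_m * 'I_n corresponds to i * n + j in 'I_(m * n) *)
Lemma tidx1_proof m n (k : 'I_(m * n)) : (k %/ n < m)%N.
Proof.
case: n k => [|n] k; first by case: k => k; rewrite muln0.
by rewrite ltn_divLR.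
Qed.

Lemma tidx2_proof m n (k : 'I_(m * n)) : (k %% n < n)%N.
Proof.
case: n k => [|n] k; first by case: k => k; rewrite muln0.
by rewrite ltn_mod.
Qed.

Lemma tpair_proof m n (i : 'I_m) (j : 'I_n) : (i * n + j < m * n)%N.
Proof.
case: i => i Hi; case: j => j Hj /=.
apply: (@leq_trans (i * n + n)); first by rewrite ltn_add2l.
by rewrite -mulSnr leq_mul2r Hi orbT.
Qed.

Definition tidx1 m n (k : 'I_(m * n)) : 'I_m := Ordinal (tidx1_proof k).
Definition tidx2 m n (k : 'I_(m * n)) : 'I_n := Ordinal (tidx2_proof k).
Definition tpair m n (i : 'I_m) (j : 'I_n) : 'I_(m * n) := Ordinal (tpair_proof i j).

Section QOps.
Variable C : numClosedFieldType.

Definition kron m1 n1 m2 n2 (A : 'M[C]_(m1, n1)) (B : 'M[C]_(m2, n2))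
  : 'M[C]_(m1 * m2, n1 * n2) :=
  \matrix_(k, l) (A (tidx1 k) (tidx1 l) * B (tidx2 k) (tidx2 l)).

(* (id_k (x) F) applied to an operator on C^k (x) C^N *)
Definition ampl k N M (F : 'M[C]_N -> 'M[C]_M) (X : 'M[C]_(k * N)) : 'M[C]_(k * M) :=
  \matrix_(p, q)
    (F (\matrix_(a, b) X (tpair (tidx1 p) a) (tpair (tidx1 q) b))) (tidx2 p) (tidx2 q).

Definition completely_positive N M (F : 'M[C]_N -> 'M[C]_M) : Prop :=
  forall (k : nat) (X : 'M[C]_(k * N)), psd X -> psd (ampl F X).

Definition trace_nonincreasing N M (F : 'M[C]_N -> 'M[C]_M) : Prop :=
  forall X : 'M[C]_N, psd X -> \tr (F X) <= \tr X.

Definition prob_qtrans N M (F : 'M[C]_N -> 'M[C]_M) : Prop :=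
  linear F /\ completely_positive F /\ trace_nonincreasing F.

Definition qubit (alpha beta : C) : 'cV[C]_2 :=
  \col_(i < 2) (if val i == 0%N then alpha else beta).

End QOps.

(* A single Kraus operator K, scaled down to be trace non-increasing, does the
   job.  Controlled by the qubit, K contracts <X| with the factors
   |phi>|phi>|psi> and keeps the other |psi> (|0>-branch), or contracts <X| with
   |psi>|psi>|phi> and keeps the other |phi> (|1>-branch).  The input is thus
   sent to alpha <X|phi phi psi> |psi> + beta <X|psi psi phi> |phi>, and
   weighting the branches by sqrt c1 and sqrt c2 turns the two overlaps into
   sqrt (c1 c2) times their phases.  Complete positivity is automatic for
   X |-> K X K^dagger; the scale comes from the bound |X_ij| <= 2 tr X on
   positive semidefinite matrices. *)

From HB Require Import structures.
From mathcomp Require Import all_boot all_order all_algebra.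
From mathcomp Require Import ring.
Set Implicit Arguments. Unset Strict Implicit. Unset Printing Implicit Defensive.
Import Order.TTheory GRing.Theory Num.Theory.
Local Open Scope ring_scope.

Lemma tidx1_tpair m n (i : 'I_m) (j : 'I_n) : tidx1 (tpair i j) = i.
Proof.
apply: val_inj; case: i j => i Hi [j Hj] /=.
by rewrite divnMDl ?divn_small ?addn0 //; case: n Hj.
Qed.

Lemma tidx2_tpair m n (i : 'I_m) (j : 'I_n) : tidx2 (tpair i j) = j.
Proof. by apply: val_inj; case: i j => i Hi [j Hj] /=; rewrite modnMDl modn_small. Qed.

Lemma tpair_tidx m n (k : 'I_(m * n)) : tpair (tidx1 k) (tidx2 k) = k.
Proof. by apply: val_inj => /=; rewrite -divn_eq. Qed.

Lemma sum_tpair (R : nmodType) m n (F : 'I_(m * n) -> R) :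
  \sum_(k < m * n) F k = \sum_(i < m) \sum_(j < n) F (tpair i j).
Proof.
rewrite pair_big (reindex (fun p : 'I_m * 'I_n => tpair p.1 p.2)) //=.
exists (fun k => (tidx1 k, tidx2 k)) => [[i j] _ | k _] /=.
  by rewrite tidx1_tpair tidx2_tpair.
by rewrite tpair_tidx.
Qed.

Lemma sum_delta_mul (R : pzSemiRingType) (I : finType) (j : I) (f : I -> R) :
  \sum_i (i == j)%:R * f i = f j.
Proof.
rewrite (bigD1 j) //= eqxx mul1r big1 ?addr0 // => i /negPf ->.
by rewrite mul0r.
Qed.

Section Adjoint.
Variable C : numClosedFieldType.

Lemma adjmxM m n p (A : 'M[C]_(m, n)) (B : 'M[C]_(n, p)) :
  adjmx (A *m B) = adjmx B *m adjmx A.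
Proof. by rewrite /adjmx map_mxM trmx_mul. Qed.

Lemma adjmxK m n (A : 'M[C]_(m, n)) : adjmx (adjmx A) = A.
Proof. by apply/matrixP => i j; rewrite !mxE conjCK. Qed.

Lemma adjmxZ m n (a : C) (A : 'M[C]_(m, n)) : adjmx (a *: A) = a^* *: adjmx A.
Proof. by apply/matrixP => i j; rewrite !mxE rmorphM. Qed.

Lemma adjmxD m n (A B : 'M[C]_(m, n)) : adjmx (A + B) = adjmx A + adjmx B.
Proof. by apply/matrixP => i j; rewrite !mxE rmorphD. Qed.

Lemma braketDl n (u v w : 'cV[C]_n) : braket (u + v) w = braket u w + braket v w.
Proof. by rewrite /braket adjmxD mulmxDl mxE. Qed.

Lemma braketDr n (u v w : 'cV[C]_n) : braket u (v + w) = braket u v + braket u w.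
Proof. by rewrite /braket mulmxDr mxE. Qed.

Lemma braketZl n a (u v : 'cV[C]_n) : braket (a *: u) v = a^* * braket u v.
Proof. by rewrite /braket adjmxZ -scalemxAl mxE. Qed.

Lemma braketZr n a (u v : 'cV[C]_n) : braket u (a *: v) = a * braket u v.
Proof. by rewrite /braket -scalemxAr mxE. Qed.

Lemma braket_delta n (A : 'M[C]_n) i j :
  braket (delta_mx i 0) (A *m delta_mx j 0) = A i j.
Proof.
rewrite /braket; have -> : adjmx (delta_mx i 0) = delta_mx 0 i :> 'M[C]_(1, n).
  by apply/matrixP => a b; rewrite !mxE rmorph_nat andbC.
by rewrite -colE -rowE !mxE.
Qed.

Lemma braket_self n (v : 'cV[C]_n) : braket v v = \sum_i `|v i 0| ^+ 2.
Proof. by rewrite /braket mxE; apply: eq_bigr => i _; rewrite !mxE normCKC. Qed.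

Lemma braket_self_gt0 n (v : 'cV[C]_n) : v != 0 -> 0 < braket v v.
Proof.
move=> v_neq0; have sq_ge0 i : 0 <= `|v i 0| ^+ 2 by apply: exprn_ge0.
rewrite braket_self lt_def sumr_ge0 ?andbT //.
apply: contra v_neq0 => /eqP/psumr_eq0P v0; apply/eqP/matrixP => i j.
have /eqP := v0 (fun i _ => sq_ge0 i) i isT.
by rewrite [j]ord1 !mxE expf_eq0 /= normr_eq0 => /eqP.
Qed.

End Adjoint.

Section Psd.
Variable C : numClosedFieldType.

Lemma psd_conj m n (A : 'M[C]_(m, n)) (X : 'M[C]_n) :
  psd X -> psd (A *m X *m adjmx A).
Proof.
by move=> pX v; have := pX (adjmx A *m v); rewrite /braket adjmxM adjmxK !mulmxA.
Qed.

Lemma psdZ n (t : C) (X : 'M[C]_n) : 0 <= t -> psd X -> psd (t *: X).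
Proof.
move=> t_ge0 pX v; rewrite /braket -scalemxAl -scalemxAr mxE.
exact: mulr_ge0 (pX v).
Qed.

Lemma psd_diag_ge0 n (X : 'M[C]_n) i : psd X -> 0 <= X i i.
Proof. by move=> pX; rewrite -braket_delta; apply: pX. Qed.

Lemma psd_phase_ge0 n (X : 'M[C]_n) i j (z : C) : psd X -> z^* * z = 1 ->
  0 <= (X i i + X j j) + (z * X i j + z^* * X j i).
Proof.
move=> pX zz; have := pX (delta_mx i 0 + z *: delta_mx j 0).
rewrite mulmxDr -scalemxAr braketDl !braketDr !braketZr !braketZl !braket_delta.
rewrite [z * (z^* * _)]mulrA [z * z^*]mulrC zz mul1r.
suff -> : X i i + X j j + (z * X i j + z^* * X j i)
  = X i i + z * X i j + (z^* * X j i + X j j) by [].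
ring.
Qed.

Lemma norm_le_of_addsub (s w : C) : 0 <= s + w -> 0 <= s - w -> `|w| <= s.
Proof.
move=> sDw sBw; have s_ge0 : 0 <= s.
  by have := addr_ge0 sDw sBw; rewrite addrACA subrr addr0 -mulr2n pmulrn_lge0.
have w_real : w \is Num.real.
  by rewrite -[w](addrK s) realB ?ger0_real // addrC.
by rewrite real_ler_norml // -[- s <= w]subr_ge0 opprK addrC sDw -subr_ge0.
Qed.

Lemma psd_norm_entry_le n (X : 'M[C]_n) i j : psd X -> `|X i j| <= X i i + X j j.
Proof.
move=> pX; set s := X i i + X j j; set x := X i j; set y := X j i.
have phase_ge0 z w : z^* * z = 1 -> z * x + z^* * y = w -> 0 <= s + w.
  by move=> zz <-; apply: psd_phase_ge0.
have conjNi : (- 'i)^* = 'i :> C by rewrite raddfN /= conjCi opprK.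
have unit_i : 'i^* * 'i = 1 :> C by rewrite conjCi mulNr -expr2 sqrCi opprK.
have unit_Ni : (- 'i)^* * - 'i = 1 :> C by rewrite conjNi mulrN -expr2 sqrCi opprK.
have le_sum : `|x + y| <= s.
  apply: norm_le_of_addsub; first by apply: (phase_ge0 1); rewrite rmorph1 ?mulr1 ?mul1r.
  by apply: (phase_ge0 (-1)); rewrite rmorphN1 ?mulrNN ?mulr1 // !mulN1r opprD.
have le_diff : `|x - y| <= s.
  rewrite -[`|x - y|]mul1r -(normCi C) -normrM; apply: norm_le_of_addsub.
    by apply: (phase_ge0 'i); rewrite // conjCi mulrBr mulNr.
  by apply: (phase_ge0 (- 'i)); rewrite // conjNi mulrBr !mulNr opprB addrC.
rewrite -(ler_pMn2r (_ : 0 < 2)%N) // -normrMn !mulr2n.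
have -> : x + x = (x + y) + (x - y) by rewrite addrACA subrr addr0.
exact: le_trans (ler_normD _ _) (lerD le_sum le_diff).
Qed.

End Psd.

Section Kraus.
Variable C : numClosedFieldType.

Lemma psd_mxtrace_ge0 n (X : 'M[C]_n) : psd X -> 0 <= \tr X.
Proof. by move=> pX; apply: sumr_ge0 => i _; apply: psd_diag_ge0. Qed.

Lemma psd_diag_le_mxtrace n (X : 'M[C]_n) i : psd X -> X i i <= \tr X.
Proof.
move=> pX; rewrite /mxtrace (bigD1 i) //= lerDl.
by apply: sumr_ge0 => j _; apply: psd_diag_ge0.
Qed.

Lemma psd_norm_entry_le_mxtrace n (X : 'M[C]_n) i j : psd X -> `|X i j| <= \tr X *+ 2.
Proof.
move=> pX; apply: le_trans (psd_norm_entry_le i j pX) _.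
by rewrite mulr2n lerD ?psd_diag_le_mxtrace.
Qed.

Lemma norm_mxtrace_mul_le n (A X : 'M[C]_n) : psd X ->
  `|\tr (A *m X)| <= (\sum_i \sum_j `|A i j|) * (\tr X *+ 2).
Proof.
move=> pX; rewrite mulr_suml; apply: le_trans (ler_norm_sum _ _ _) _.
apply: ler_sum => i _; rewrite mxE mulr_suml.
apply: le_trans (ler_norm_sum _ _ _) _; apply: ler_sum => j _.
by rewrite normrM ler_wpM2l ?psd_norm_entry_le_mxtrace.
Qed.

Definition kraus m n (K : 'M[C]_(m, n)) (t : C) (X : 'M[C]_n) : 'M[C]_m :=
  t *: (K *m X *m adjmx K).

Lemma kraus_linear m n (K : 'M[C]_(m, n)) t : linear (kraus K t).
Proof.
move=> a X Y; rewrite /kraus mulmxDr mulmxDl scalerDr.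
by rewrite -scalemxAr -scalemxAl !scalerA mulrC.
Qed.

Lemma ampl_kraus k m n (K : 'M[C]_(m, n)) t (X : 'M[C]_(k * n)) :
  ampl (kraus K t) X = kraus (kron (1%:M : 'M_k) K) t X.
Proof.
apply/matrixP => p q; rewrite !mxE; congr (_ * _); symmetry.
rewrite sum_tpair (bigD1 (tidx1 q)) //= [X in _ + X]big1 ?addr0; last first.
  move=> l /negPf Hl; apply: big1 => b _.
  by rewrite !mxE tidx1_tpair eq_sym Hl mul0r rmorph0 mulr0.
apply: eq_bigr => b _; rewrite !mxE !tidx1_tpair !tidx2_tpair eqxx mul1r.
congr (_ * _).
rewrite sum_tpair (bigD1 (tidx1 p)) //= [X in _ + X]big1 ?addr0; last first.
  move=> l /negPf Hl; apply: big1 => a _.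
  by rewrite !mxE tidx1_tpair eq_sym Hl !mul0r.
by apply: eq_bigr => a _; rewrite !mxE !tidx1_tpair !tidx2_tpair eqxx mul1r.
Qed.

Lemma kraus_cp m n (K : 'M[C]_(m, n)) t : 0 <= t -> completely_positive (kraus K t).
Proof. by move=> t_ge0 k X pX; rewrite ampl_kraus; apply: psdZ (psd_conj _ pX). Qed.

(* |tr (K^dagger K X)| <= M * 2 tr X with M the entrywise 1-norm of K^dagger K. *)
Definition kraus_scale m n (K : 'M[C]_(m, n)) : C :=
  (1 + (\sum_i \sum_j `|(adjmx K *m K) i j|) *+ 2)^-1.

Lemma kraus_scale_gt0 m n (K : 'M[C]_(m, n)) : 0 < kraus_scale K.
Proof.
rewrite invr_gt0 (lt_le_trans ltr01) // lerDl mulrn_wge0 //.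
by do 2![apply: sumr_ge0 => ? _].
Qed.

Lemma kraus_tni m n (K : 'M[C]_(m, n)) : trace_nonincreasing (kraus K (kraus_scale K)).
Proof.
move=> X pX; have t_gt0 := kraus_scale_gt0 K.
have tr_ge0 : 0 <= \tr (kraus K (kraus_scale K) X).
  by apply: psd_mxtrace_ge0; apply: psdZ (ltW t_gt0) (psd_conj K pX).
rewrite -(ger0_norm tr_ge0) mxtraceZ normrM (gtr0_norm t_gt0) mxtrace_mulC mulmxA.
apply: le_trans (ler_wpM2l (ltW t_gt0) (norm_mxtrace_mul_le _ pX)) _.
move: t_gt0; rewrite /kraus_scale; set M : C := \sum_i _ => t_gt0.
have den_gt0 : 0 < 1 + M *+ 2 by rewrite -invr_gt0.
rewrite mulrC ler_pdivrMr // [\tr X * _]mulrDr mulr1 !mulrnAr [M * _]mulrC lerDr.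
exact: psd_mxtrace_ge0.
Qed.

Lemma prob_qtrans_kraus m n (K : 'M[C]_(m, n)) : prob_qtrans (kraus K (kraus_scale K)).
Proof.
split; first exact: kraus_linear.
by split; [apply/kraus_cp/ltW/kraus_scale_gt0 | apply: kraus_tni].
Qed.

End Kraus.

Section Sums.
Variables (R : pzSemiRingType) (I : finType).

Lemma sum3_rotate (g : I -> I -> I -> R) :
  \sum_i \sum_j \sum_k g i j k = \sum_j \sum_k \sum_i g i j k.
Proof. by rewrite exchange_big; apply: eq_bigr => j _; apply: exchange_big. Qed.

Lemma sum4_delta_first (o : I) (u : I -> R) (g : I -> I -> I -> R) :
  \sum_a \sum_b \sum_c \sum_e (a == o)%:R * u a * g b c e
  = u o * \sum_b \sum_c \sum_e g b c e.
Proof.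
rewrite -(sum_delta_mul o (fun a => u a * _)); apply: eq_bigr => a _.
rewrite mulrA big_distrr; apply: eq_bigr => b _.
by rewrite big_distrr; apply: eq_bigr => c _; rewrite big_distrr.
Qed.

Lemma sum4_delta_last (o : I) (u : I -> R) (g : I -> I -> I -> R) :
  \sum_a \sum_b \sum_c \sum_e g a b c * ((e == o)%:R * u e)
  = (\sum_a \sum_b \sum_c g a b c) * u o.
Proof.
rewrite !big_distrl; apply: eq_bigr => a _; rewrite !big_distrl.
apply: eq_bigr => b _; rewrite !big_distrl; apply: eq_bigr => c _.
by rewrite -big_distrr sum_delta_mul.
Qed.

End Sums.

Section PureStates.
Variable C : numClosedFieldType.

Lemma kron_col_entry m n (u : 'cV[C]_m) (v : 'cV[C]_n) i (j : 'I_(1 * 1)) :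
  kron u v i j = u (tidx1 i) 0 * v (tidx2 i) 0.
Proof. by rewrite mxE [tidx1 j]ord1 [tidx2 j]ord1. Qed.

Lemma kron_rho m n (u : 'cV[C]_m) (v : 'cV[C]_n) :
  kron (rho u) (rho v) = rho (kron u v).
Proof.
apply/matrixP => i j; rewrite /rho !mxE !big_ord1 !mxE.
have [-> ->] : tidx1 (0 : 'I_(1 * 1)) = 0 /\ tidx2 (0 : 'I_(1 * 1)) = 0.
  by split; apply: ord1.
by rewrite rmorphM; ring.
Qed.

Lemma rhoZ n (a : C) (v : 'cV[C]_n) : rho (a *: v) = (a * a^*) *: rho v.
Proof. by rewrite /rho adjmxZ -scalemxAl -scalemxAr scalerA. Qed.

Lemma kraus_rho m n (K : 'M[C]_(m, n)) t (w : 'cV[C]_n) :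
  kraus K t (rho w) = t *: rho (K *m w).
Proof. by rewrite /kraus /rho adjmxM !mulmxA. Qed.

Lemma rho_normalize n (v : 'cV[C]_n) : rho (normalize v) = (braket v v)^-1 *: rho v.
Proof.
have v_ge0 : 0 <= braket v v by rewrite braket_self sumr_ge0 // => i _; apply: exprn_ge0.
rewrite /normalize rhoZ geC0_conj ?invr_ge0 ?sqrtC_ge0 //.
by rewrite -expr2 exprVn sqrtCK.
Qed.

End PureStates.

Section FiveFold.
Variables (C : numClosedFieldType) (d : nat).

(* Decodes the column index of a five-fold kron, in its row-major order. *)
Definition mx5 (f : 'I_d -> 'I_2 -> 'I_d -> 'I_d -> 'I_d -> 'I_d -> C) :
    'M[C]_(d, 2 * d * d * d * d) :=
  \matrix_(o, r) let r1 := tidx1 r in let r2 := tidx1 r1 in let r3 := tidx1 r2 in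
    f o (tidx1 r3) (tidx2 r3) (tidx2 r2) (tidx2 r1) (tidx2 r).

Definition kron5 (mu : 'cV[C]_2) (u1 u2 u3 u4 : 'cV[C]_d) :=
  kron (kron (kron (kron mu u1) u2) u3) u4.

Lemma mx5_mul f mu u1 u2 u3 u4 o :
  (mx5 f *m kron5 mu u1 u2 u3 u4) o 0 = \sum_q \sum_a \sum_b \sum_c \sum_e
    f o q a b c e * (mu q 0 * u1 a 0 * u2 b 0 * u3 c 0 * u4 e 0).
Proof.
rewrite mxE !sum_tpair; do 5!apply: eq_bigr => ? _.
by rewrite /kron5 !kron_col_entry mxE /= !tidx1_tpair !tidx2_tpair.
Qed.

Lemma braket_kron3 (X : 'cV[C]_(d * d * d)) (u v w : 'cV[C]_d) :
  braket X (kron (kron u v) w) =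
  \sum_i \sum_j \sum_k (X (tpair (tpair i j) k) 0)^* * (u i 0 * v j 0 * w k 0).
Proof.
rewrite /braket mxE !sum_tpair; do 3!apply: eq_bigr => ? _.
by rewrite !kron_col_entry !mxE !tidx1_tpair !tidx2_tpair.
Qed.

End FiveFold.

Section OverlapKraus.
Variables (C : numClosedFieldType) (d : nat) (X : 'cV[C]_(d * d * d)) (s1 s2 : C).

(* q is the control qubit; a, b, c, e index the factors psi, psi, phi, phi. *)
Definition overlap_entry (o : 'I_d) (q : 'I_2) (a b c e : 'I_d) : C :=
  if q == ord0 then s1 * (a == o)%:R * (X (tpair (tpair c e) b) 0)^*
  else s2 * (e == o)%:R * (X (tpair (tpair a b) c) 0)^*.

Lemma overlap_kraus_mul alpha beta (psi phi : 'cV[C]_d) :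
  mx5 overlap_entry *m kron5 (qubit alpha beta) psi psi phi phi
  = (alpha * s1 * braket X (kron (kron phi phi) psi)) *: psi
  + (beta * s2 * braket X (kron (kron psi psi) phi)) *: phi.
Proof.
apply/matrixP => o j; rewrite [j]ord1 mx5_mul big_ord_recl big_ord1 !mxE /=.
congr (_ + _).
  transitivity (\sum_a \sum_b \sum_c \sum_e (a == o)%:R * (alpha * s1 * psi a 0)
      * ((X (tpair (tpair c e) b) 0)^* * (phi c 0 * phi e 0 * psi b 0))).
    by do 4!apply: eq_bigr => ? _; rewrite /overlap_entry /=; ring.
  by rewrite sum4_delta_first braket_kron3 sum3_rotate; ring.
transitivity (\sum_a \sum_b \sum_c \sum_e
    (X (tpair (tpair a b) c) 0)^* * (psi a 0 * psi b 0 * phi c 0)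
    * ((e == o)%:R * (beta * s2 * phi e 0))).
  by do 4!apply: eq_bigr => ? _; rewrite /overlap_entry /=; ring.
by rewrite sum4_delta_last braket_kron3; ring.
Qed.

End OverlapKraus.

Lemma sqrtC_mul_phase (C : numClosedFieldType) (z c : C) :
  0 < c -> `|z| ^+ 2 = c -> z = sqrtC c * phase z.
Proof.
move=> c_gt0 zc; have z_neq0 : `|z| != 0.
  by apply: contraTneq c_gt0 => z0; rewrite -zc z0 expr0n ltxx.
by rewrite -zc sqrCK // /phase mulrC divfK.
Qed.

Theorem theorem8 (C : numClosedFieldType) (d : nat) (hd : (2 <= d)%N)
  (X : 'cV[C]_(d * d * d)) (hX : unit_vec X) (c1 c2 : C)
  (hc1 : 0 < c1) (hc2 : 0 < c2) :
  exists F : 'M[C]_(2 * d * d * d * d) -> 'M[C]_d,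
    prob_qtrans F /\
    forall alpha beta : C,
      alpha != 0 -> beta != 0 -> `|alpha| ^+ 2 + `|beta| ^+ 2 = 1 ->
      forall psi phi : 'cV[C]_d,
        unit_vec psi -> unit_vec phi ->
        `|braket X (kron (kron psi psi) phi)| ^+ 2 = c1 ->
        `|braket X (kron (kron phi phi) psi)| ^+ 2 = c2 ->
        let chi := (alpha * phase (braket X (kron (kron phi phi) psi))) *: psi
                 + (beta * phase (braket X (kron (kron psi psi) phi))) *: phi in
        chi != 0 ->
        exists p : C, 0 < p /\
          F (kron (kron (kron (kron (rho (qubit alpha beta)) (rho psi)) (rho psi))
                        (rho phi)) (rho phi))
          = p *: rho (normalize chi).
Proof.
set s1 := sqrtC c1; set s2 := sqrtC c2; set K := mx5 (overlap_entry X s1 s2).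
exists (kraus K (kraus_scale K)); split; first exact: prob_qtrans_kraus.
move=> alpha beta _ _ _ psi phi _ _ h1 h2 chi chi_neq0.
have K_state : K *m kron5 (qubit alpha beta) psi psi phi phi = (s1 * s2) *: chi.
  rewrite overlap_kraus_mul /chi scalerDr !scalerA.
  rewrite {1}(sqrtC_mul_phase hc2 h2) {1}(sqrtC_mul_phase hc1 h1) -/s1 -/s2.
  by congr (_ *: _ + _ *: _); ring.
have s_neq0 : s1 * s2 != 0 by rewrite mulf_neq0 // sqrtC_eq0 lt0r_neq0.
have chi_gt0 := braket_self_gt0 chi_neq0.
exists (kraus_scale K * `|s1 * s2| ^+ 2 * braket chi chi); split.
  by rewrite !mulr_gt0 ?kraus_scale_gt0 ?exprn_gt0 ?normr_gt0.
rewrite !kron_rho kraus_rho K_state rhoZ rho_normalize -normCK !scalerA.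
by rewrite mulfK ?lt0r_neq0.
Qed.
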